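(* In the setting below, for every nonempty $A\subseteq[n]$: $\Pr_{\psi\sim\Psi}(E_1(\psi)\wedge\neg E_2(\psi))\le 2^{-6}$.
   Context: $[N]:=\{0,\dots,N-1\}$. Fix integers $n\ge1$ and real $0<\varepsilon<1$. Let $b:=2^{\lceil\log_2(9\cdot 2^{23}\varepsilon^{-2})\rceil}$ and $k:=\lceil\tfrac{15}{2}\ln b+16\rceil$. Hash families: for $d\ge1$, identify $[2^d]$ with $\mathrm{GF}(2^d)$ via binary representation. For $k'\ge1$, $N\le 2^d$, $c\le d$, $\mathcal H_{k'}([N],[2^c])$ is the uniform distribution over tuples $(a_0,\dots,a_{k'-1})\in\mathrm{GF}(2^d)^{k'}$, each giving $x\mapsto(\sum_ia_ix^i)\bmod 2^c$ on $[N]$; $\mathcal G_{k'}([N])$ is uniform over the same tuples giving $x\mapsto\mathrm{tz}(\sum_ia_ix^i)$, $\mathrm{tz}(y)$ = number of trailing zeros of the $d$-bit representation of $y$ ($\mathrm{tz}(0)=d$). Here $d$ is a fixed integer with $2^d\ge N$, $d\ge c$. $\Psi:=\mathcal G_2([n])\times\mathcal H_2([n],[2^5b^2])\times\mathcal H_k([2^5b^2],[b])$ with the uniform product distribution; $\psi=(f,g,h)$. For fixed nonempty $A\subseteq[n]$: $t(f):=\max_{a\in A}f(a)-\log_2b+9$; $s(f):=\max(0,t(f))$; $R(f):=\{a\in A: f(a)\ge s(f)\}$. Events: $E_1(\psi)$: $2^{-16}b\le 2^{-t(f)}|A|\le 2^{-1}b$; $E_2(\psi)$: $\big||R(f)|-2^{-s(f)}|A|\big|\le\frac{\varepsilon}{3}2^{-s(f)}|A|$.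 *)

From HB Require Import structures.
From mathcomp Require Import all_boot all_order all_algebra.
From mathcomp Require Import reals exp.
Set Implicit Arguments. Unset Strict Implicit. Unset Printing Implicit Defensive.
Import Order.TTheory GRing.Theory Num.Theory.
Local Open Scope ring_scope.

(* GF(2^d) is F_2[X]/(p) for an irreducible p of degree d over 'F_2;
   the integer u < 2^d is identified with the polynomial whose coefficient
   of X^j is bit j of u (binary representation). *)
Definition bitpoly (d u : nat) : {poly 'F_2} :=
  \poly_(j < d) ((odd (u %/ 2 ^ j))%N%:R : 'F_2).

Definition gf_eval (d : nat) (p : {poly 'F_2}) (k' : nat)
  (a : {ffun 'I_k' -> 'I_(2 ^ d)}) (x : nat) : {poly 'F_2} :=
  (\sum_(i < k') bitpoly d (a i) * bitpoly d x ^+ i) %% p.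

Definition coefnz (r : {poly 'F_2}) (j : nat) : bool := r`_j != 0.

(* number of trailing zeros of the d-bit representation (tz 0 = d) *)
Definition tz (d : nat) (r : {poly 'F_2}) : nat :=
  find (fun j => coefnz r j) (iota 0 d).

Definition lowbits (c : nat) (r : {poly 'F_2}) : nat :=
  \sum_(j < c) muln (nat_of_bool (coefnz r j)) (expn 2 j).

Definition Gfun (d : nat) (p : {poly 'F_2}) (k' : nat)
  (a : {ffun 'I_k' -> 'I_(2 ^ d)}) (N : nat) (x : 'I_N) : nat :=
  tz d (gf_eval p a x).

Definition Hfun (d : nat) (p : {poly 'F_2}) (k' : nat)
  (a : {ffun 'I_k' -> 'I_(2 ^ d)}) (N c : nat) (x : 'I_N) : nat :=
  lowbits c (gf_eval p a x).

Definition prob (R : realType) (T : finType) (E : pred T) : R :=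
  #|[set x | E x]|%:R / #|T|%:R.

Definition beta (R : realType) (eps : R) : nat :=
  `|Num.ceil (ln (9 * 2 ^+ 23 / eps ^+ 2) / ln 2)|%N.
Definition bb (R : realType) (eps : R) : nat := (2 ^ beta eps)%N.
Definition kk (R : realType) (eps : R) : nat :=
  `|Num.ceil (15 / 2 * ln ((bb eps)%:R : R) + 16)|%N.

Section Events.
Variables (R : realType) (eps : R) (n : nat) (A : {set 'I_n}).

Definition tf (f : 'I_n -> nat) : int :=
  ((\max_(a in A) f a)%N%:Z - (beta eps)%:Z + 9)%R.
Definition sf (f : 'I_n -> nat) : int := Num.max 0 (tf f).
Definition Rf (f : 'I_n -> nat) : {set 'I_n} :=
  [set a in A | sf f <= (f a)%:Z].

Definition E1 (f : 'I_n -> nat) : bool :=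
  ((2 : R) ^- 16 * (bb eps)%:R <= (2 : R) ^ (- tf f) * #|A|%:R) &&
  ((2 : R) ^ (- tf f) * #|A|%:R <= (2 : R) ^- 1 * (bb eps)%:R).

Definition E2 (f : 'I_n -> nat) : bool :=
  `| #|Rf f|%:R - (2 : R) ^ (- sf f) * #|A|%:R |
    <= eps / 3 * ((2 : R) ^ (- sf f) * #|A|%:R).
End Events.

From mathcomp Require Import all_boot all_order all_algebra.
From mathcomp Require Import reals exp sequences.
From mathcomp Require Import zify ring lra.
Set Implicit Arguments.
Unset Strict Implicit.
Unset Printing Implicit Defensive.

Import Order.TTheory GRing.Theory Num.Theory.

(* Only the first hash f enters E1 and E2.  For a fixed level s, the events
   [s <= f(a)], a in A, each have probability 2^-s and are pairwise independent,
   because x |-> a0 + a1 x is a pairwise independent family over GF(2^d) and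
   tz(y) >= s only says that the s low bits of y vanish.  Chebyshev's inequality
   then bounds the probability that |{a in A | f(a) >= s}| deviates by more than
   (eps/3) 2^-s |A| from its mean by 9 2^s / (eps^2 |A|).  If E1 holds but E2
   fails then t(f) > 0, so this deviation happens at the level s = t(f), where
   E1 gives 2^s b <= 2^16 |A|; summing the geometric series of these levels
   yields at most 9 2^17 / (eps^2 b) <= 2^-6 by the choice of b. *)

Lemma sum_bits (d u : nat) : u < 2 ^ d ->
  \sum_(j < d) odd (u %/ 2 ^ j) * 2 ^ j = u.
Proof.
elim: d u => [|d IH] u hu.
  by rewrite big_ord0; move: hu; rewrite expn0; case: u.
rewrite big_ord_recl /= expn0 divn1 muln1.
under eq_bigr => j _ do rewrite /bump /= add1n expnS divnMA mulnCA.
rewrite -big_distrr /= IH; last by rewrite ltn_divLR // mulnC -expnS.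
by rewrite {3}(divn_eq u 2) modn2 mulnC addnC.
Qed.

Lemma card_preimset_inj (T U : finType) (f : T -> U) (B : {set U}) :
  injective f -> #|U| <= #|T| -> #|f @^-1: B| = #|B|.
Proof. by move=> f_inj le_UT; apply/on_card_preimset/onW_bij/inj_card_bij. Qed.

Lemma card_bigcup_le (I T : finType) (P : pred I) (F : I -> {set T}) :
  #|\bigcup_(i | P i) F i| <= \sum_(i | P i) #|F i|.
Proof.
elim/big_rec2: _ => [|i B m _ IH]; first by rewrite cards0.
by rewrite cardsU (leq_trans (leq_subr _ _)) // leq_add2l.
Qed.

Lemma card_ffun_prefix (T : finType) (x0 : T) (d s : nat) : s <= d ->
  #|[set f : {ffun 'I_d -> T} | [forall j : 'I_d, (j < s) ==> (f j == x0)]]|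
    = #|T| ^ (d - s).
Proof.
move=> sd.
pose F (j : 'I_d) := if j < s then pred1 x0 else predT.
have -> : [set f : {ffun 'I_d -> T} | [forall j : 'I_d, (j < s) ==> (f j == x0)]]
    = [set f in family F].
  apply/setP => f; rewrite !inE; apply/forallP/familyP => h j;
  by have := h j; rewrite /F; case: (j < s).
rewrite cardsE card_family foldrE big_image /=.
rewrite (eq_bigr (fun j : 'I_d => if j < s then 1 else #|T|)); last first.
  by move=> j _; rewrite /F; case: (j < s); rewrite ?card1.
rewrite -(big_mkord xpredT (fun j => if j < s then 1 else #|T|)).
rewrite (big_cat_nat (n := s)) //= big_nat_cond big1 ?mul1n; last first.
  by move=> i /andP[/andP[_ ->]].
rewrite big_nat_cond (eq_bigr (fun _ => #|T|)); last first.
  by move=> i /andP[/andP[]]; rewrite leqNgt => /negbTE ->.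
by rewrite -big_nat_cond prod_nat_const_nat.
Qed.

Lemma tz_le (d : nat) (r : {poly 'F_2}) : tz d r <= d.
Proof. by rewrite /tz -{2}(size_iota 0 d) find_size. Qed.

Lemma leq_tz (d s : nat) (r : {poly 'F_2}) : s <= d ->
  (s <= tz d r) = [forall j : 'I_d, (j < s) ==> (r`_j == 0)%R].
Proof.
move=> sd; rewrite /tz; apply/idP/forallP => [h j|h].
  apply/implyP => js.
  have := @before_find _ 0 (coefnz r) (iota 0 d) j (leq_trans js h).
  by rewrite nth_iota // add0n /coefnz => /negbT; rewrite negbK.
rewrite leqNgt; apply/negP => hf.
have hs : has (coefnz r) (iota 0 d) by rewrite has_find size_iota (leq_trans hf).
have := nth_find 0 hs; set k := find _ _.
have kd : k < d by rewrite -(size_iota 0 d) -has_find.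
by rewrite nth_iota // add0n /coefnz; have := h (Ordinal kd); rewrite /= hf /= => ->.
Qed.

(* The invariant [sum + B <= 2^m B] makes the induction go through. *)
Lemma sum_pow2_le (B C m : nat) : \sum_(s < m | 2 ^ s * B <= C) 2 ^ s * B <= 2 * C.
Proof.
suff : \sum_(s < m | 2 ^ s * B <= C) 2 ^ s * B <= 2 * C /\
       \sum_(s < m | 2 ^ s * B <= C) 2 ^ s * B + B <= 2 ^ m * B by case.
elim: m => [|m [IH1 IH2]]; first by rewrite big_ord0 expn0 mul1n.
rewrite big_mkcond big_ord_recr /= -big_mkcond expnS.
move: IH1 IH2; set S := \sum_(_ < _ | _) _; set X := 2 ^ m.
by case: ifP => h; lia.
Qed.

Local Open Scope ring_scope.

Lemma bitpoly_inj (d u v : nat) : (u < 2 ^ d)%N -> (v < 2 ^ d)%N ->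
  bitpoly d u = bitpoly d v -> u = v.
Proof.
move=> hu hv E; rewrite -(sum_bits hu) -(sum_bits hv); apply: eq_bigr => j _.
have := congr1 (fun q : {poly 'F_2} => q`_j) E; rewrite /bitpoly !coef_poly ltn_ord.
by case: odd; case: odd.
Qed.

Lemma modp_eq_dvdp (F : fieldType) (q r s : {poly F}) : r %% q = s %% q -> q %| r - s.
Proof. by move=> e; apply/modp_eq0P; rewrite modpD modpN e subrr. Qed.

Lemma ffun2P (T : Type) (a b : {ffun 'I_2 -> T}) :
  a ord0 = b ord0 -> a ord_max = b ord_max -> a = b.
Proof.
move=> e0 e1; apply/ffunP => -[[|[|//]] i2].
  by rewrite (_ : Ordinal i2 = ord0) //; apply: val_inj.
by rewrite (_ : Ordinal i2 = ord_max) //; apply: val_inj.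
Qed.

Section LinearHash.
Variables (d : nat) (p : {poly 'F_2}).
Hypotheses (size_p : size p = d.+1) (p_irr : irreducible_poly p).

Local Notation Omega := {ffun 'I_2 -> 'I_(2 ^ d)}.

Let p_neq0 : p != 0. Proof. by rewrite -size_poly_eq0 size_p. Qed.

Lemma size_bitpolyB (u v : nat) : (size (bitpoly d u - bitpoly d v)%R < size p)%N.
Proof.
rewrite size_p ltnS; apply: leq_trans (size_polyD _ _) _.
by rewrite size_polyN geq_max !size_poly.
Qed.

Lemma bitpoly_dvdp_eq (u v : nat) : (u < 2 ^ d)%N -> (v < 2 ^ d)%N ->
  p %| bitpoly d u - bitpoly d v -> u = v.
Proof.
move=> hu hv p_dvd; apply: (bitpoly_inj hu hv); apply/eqP; rewrite -subr_eq0.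
by apply: contraTT (size_bitpolyB u v) => nz; rewrite -leqNgt dvdp_leq.
Qed.

Lemma coprimep_bitpolyB (u v : nat) :
  bitpoly d u != bitpoly d v -> coprimep p (bitpoly d u - bitpoly d v).
Proof.
rewrite -subr_eq0 => nz; rewrite coprimep_def.
apply: contraTT (size_bitpolyB u v) => g1; rewrite -leqNgt.
by rewrite -(eqp_size (p_irr.2 _ g1 (dvdp_gcdl _ _))) dvdp_leq ?dvdp_gcdr.
Qed.

Lemma gf_eval2 (a : Omega) (x : nat) :
  gf_eval p a x = (bitpoly d (a ord0) + bitpoly d (a ord_max) * bitpoly d x) %% p.
Proof.
rewrite /gf_eval !big_ord_recl big_ord0 expr0 expr1 mulr1 addr0.
by congr ((_ + bitpoly d (a _) * _) %% p); apply: val_inj.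
Qed.

Definition bits_of (r : {poly 'F_2}) : {ffun 'I_d -> 'F_2} := [ffun j : 'I_d => r`_j].

Lemma bits_of_gf_eval_inj (a b : Omega) (x y : nat) :
  bits_of (gf_eval p a x) = bits_of (gf_eval p b y) -> gf_eval p a x = gf_eval p b y.
Proof.
have small (c : Omega) (z : nat) : (size (gf_eval p c z) <= d)%N.
  by rewrite -ltnS -size_p ltn_modp.
move=> e; apply/polyP => j; case: (ltnP j d) => [jd|dj].
  by have := congr1 (fun f : {ffun 'I_d -> 'F_2} => f (Ordinal jd)) e; rewrite !ffunE.
by rewrite !nth_default // (leq_trans (small _ _)).
Qed.

Lemma hash_pair_inj (x y : nat) : (x < 2 ^ d)%N -> (y < 2 ^ d)%N -> x != y ->
  injective (fun a : Omega => (bits_of (gf_eval p a x), bits_of (gf_eval p a y))).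
Proof.
move=> hx hy xy a b [/bits_of_gf_eval_inj ex /bits_of_gf_eval_inj ey].
move: ex ey; rewrite !gf_eval2 => /modp_eq_dvdp dx /modp_eq_dvdp dy.
have XY : bitpoly d x != bitpoly d y by apply: contra_neq xy; apply: bitpoly_inj.
have slope : a ord_max = b ord_max.
  apply/val_inj/bitpoly_dvdp_eq; rewrite ?ltn_ord //.
  rewrite -(Gauss_dvdpl _ (coprimep_bitpolyB XY)).
  set A0 := bitpoly d (a ord0) in dx dy *; set A1 := bitpoly d (a ord_max) in dx dy *.
  set B0 := bitpoly d (b ord0) in dx dy *; set B1 := bitpoly d (b ord_max) in dx dy *.
  set X := bitpoly d x in dx dy *; set Y := bitpoly d y in dx dy *.
  suff -> : (A1 - B1) * (X - Y)
      = A0 + A1 * X - (B0 + B1 * X) - (A0 + A1 * Y - (B0 + B1 * Y)) by exact: dvdp_sub.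
  by ring.
apply: (@ffun2P _ a b _ slope); apply/val_inj/bitpoly_dvdp_eq; rewrite ?ltn_ord //.
by move: dx; rewrite slope opprD addrACA subrr addr0.
Qed.

Lemma hash_slope_inj (x : nat) :
  injective (fun a : Omega => (bits_of (gf_eval p a x), a ord_max)).
Proof.
move=> a b [/bits_of_gf_eval_inj + slope]; rewrite !gf_eval2 slope => /modp_eq_dvdp dx.
apply: (@ffun2P _ a b _ slope); apply/val_inj/bitpoly_dvdp_eq; rewrite ?ltn_ord //.
by move: dx; rewrite opprD addrACA subrr addr0.
Qed.

Lemma card_hash2 : #|Omega| = (2 ^ d * 2 ^ d)%N.
Proof. by rewrite card_ffun !card_ord expnS expn1. Qed.

Lemma card_bits : #|{ffun 'I_d -> 'F_2}| = (2 ^ d)%N.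
Proof. by rewrite card_ffun card_Fp // card_ord. Qed.

Definition low_zero (s : nat) : {set {ffun 'I_d -> 'F_2}} :=
  [set c : {ffun 'I_d -> 'F_2} | [forall j : 'I_d, (j < s)%N ==> (c j == 0)]].

Lemma card_low_zero (s : nat) : (s <= d)%N -> #|low_zero s| = (2 ^ (d - s))%N.
Proof. by move=> sd; rewrite /low_zero card_ffun_prefix // card_Fp. Qed.

Lemma card_tz_ge (x s : nat) : (s <= d)%N ->
  #|[set a : Omega | (s <= tz d (gf_eval p a x))%N]| = (2 ^ (d - s) * 2 ^ d)%N.
Proof.
move=> sd; pose f (a : Omega) := (bits_of (gf_eval p a x), a ord_max).
transitivity #|f @^-1: setX (low_zero s) setT|.
  apply: eq_card => a; rewrite !inE /= andbT leq_tz //.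
  by apply: eq_forallb => j; rewrite ffunE.
rewrite (@card_preimset_inj _ _ f _ (@hash_slope_inj x)); last first.
  by rewrite card_hash2 card_prod card_bits card_ord.
by rewrite cardsX card_low_zero // cardsT card_ord.
Qed.

Lemma card_tz_ge2 (x y s : nat) : (s <= d)%N -> (x < 2 ^ d)%N -> (y < 2 ^ d)%N -> x != y ->
  #|[set a : Omega | (s <= tz d (gf_eval p a x))%N && (s <= tz d (gf_eval p a y))%N]|
    = (2 ^ (d - s) * 2 ^ (d - s))%N.
Proof.
move=> sd hx hy xy; pose f (a : Omega) := (bits_of (gf_eval p a x), bits_of (gf_eval p a y)).
transitivity #|f @^-1: setX (low_zero s) (low_zero s)|.
  apply: eq_card => a; rewrite !inE /= !leq_tz //.
  by congr andb; apply: eq_forallb => j; rewrite ffunE.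
rewrite (@card_preimset_inj _ _ f _ (hash_pair_inj hx hy xy)); last first.
  by rewrite card_hash2 card_prod card_bits.
by rewrite cardsX card_low_zero.
Qed.

End LinearHash.

Lemma chebyshev_count (R : realFieldType) (T : finType) (X : T -> R) (m c : R) :
  0 <= c -> #|[set t | c < `|X t - m|]|%:R * c ^+ 2 <= \sum_t (X t - m) ^+ 2.
Proof.
move=> c0; rewrite -sum1_card natr_sum mulr_suml.
apply: le_trans (_ : \sum_(t in [set t | c < `|X t - m|]) (X t - m) ^+ 2 <= _).
  apply: ler_sum => t; rewrite inE mul1r => lt_c.
  by rewrite -[leRHS]real_normK ?num_real // lerXn2r ?nnegrE ?normr_ge0 // ltW.
rewrite [leRHS](bigID (mem [set t | c < `|X t - m|])) /= lerDl.
by apply: sumr_ge0 => t _; rewrite sqr_ge0.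
Qed.

Lemma natr_card_indicator (R : nzSemiRingType) (T : finType) (B : {set T}) :
  #|B|%:R = \sum_t (t \in B)%:R :> R.
Proof. by rewrite -sum1_card natr_sum big_mkcond; apply: eq_bigr => t _; case: (t \in B). Qed.

Section PairwiseIndependence.
Variables (R : realFieldType) (T I : finType) (E : I -> {set T}) (A : {set I}) (p : R).
Hypotheses (card_E : forall i, #|E i|%:R = p * #|T|%:R)
  (card_EI : forall i j, i != j -> #|E i :&: E j|%:R = p ^+ 2 * #|T|%:R).

Definition hits (t : T) : R := #|[set i in A | t \in E i]|%:R.

Lemma covariance_indicators i j :
  \sum_t ((t \in E i)%:R - p) * ((t \in E j)%:R - p)
    = if i == j then (p - p ^+ 2) * #|T|%:R else 0.
Proof.
have expand t : ((t \in E i)%:R - p) * ((t \in E j)%:R - p)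
    = (t \in E i :&: E j)%:R - p * (t \in E i)%:R - p * (t \in E j)%:R
      + p ^+ 2 * (t \in [set: T])%:R :> R.
  by rewrite in_setI in_setT -mulnb natrM (_ : true%:R = 1) //; ring.
rewrite (eq_bigr _ (fun t _ => expand t)) !big_split /= !sumrN -!mulr_sumr.
rewrite -!natr_card_indicator cardsT !card_E.
case: eqVneq => [<-|ne]; first by rewrite setIid card_E; ring.
by rewrite card_EI //; ring.
Qed.

Lemma variance_hits :
  \sum_t (hits t - p * #|A|%:R) ^+ 2 = #|A|%:R * ((p - p ^+ 2) * #|T|%:R).
Proof.
have centered t : hits t - p * #|A|%:R = \sum_(i in A) ((t \in E i)%:R - p).
  rewrite sumrB sumr_const mulr_natr; congr (_ - _).
  rewrite /hits natr_card_indicator [RHS]big_mkcond; apply: eq_bigr => i _.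
  by rewrite inE; case: (i \in A).
under eq_bigr do rewrite centered expr2 big_distrlr /=.
rewrite exchange_big /=; under eq_bigr do rewrite exchange_big /=.
rewrite [RHS]mulr_natl -[RHS]sumr_const; apply: eq_bigr => i iA.
under eq_bigr do rewrite covariance_indicators.
rewrite (bigD1 i) //= eqxx big1 ?addr0 // => j /andP[_ ji].
by rewrite eq_sym (negbTE ji).
Qed.

Lemma pairwise_indep_tail (c : R) : 0 <= c ->
  #|[set t | c < `|hits t - p * #|A|%:R|]|%:R * c ^+ 2 <= p * #|A|%:R * #|T|%:R.
Proof.
move=> c0; apply: le_trans (@chebyshev_count _ _ hits _ _ c0) _; rewrite variance_hits.
have : 0 <= #|A|%:R * p ^+ 2 * #|T|%:R :> R by do 2?apply: mulr_ge0; rewrite ?ler0n ?sqr_ge0.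
nra.
Qed.

End PairwiseIndependence.

Arguments hits {R T I} E A t.

Lemma bb_ge (R : realType) (eps : R) : 0 < eps < 1 ->
  9 * 2 ^+ 23 / eps ^+ 2 <= (bb eps)%:R.
Proof.
case/andP=> e0 e1; set c := 9 * 2 ^+ 23 / eps ^+ 2.
have c1 : 1 <= c.
  have eps2_le1 : eps ^+ 2 <= 1 by rewrite expr_le1 // ltW.
  rewrite ler_pdivlMr ?exprn_gt0 // mul1r (le_trans eps2_le1) //.
  by rewrite (_ : 9 * 2 ^+ 23 = (9 * 2 ^ 23)%N%:R) ?ler1n // natrM natrX.
have ln2 : 0 < ln (2 : R) by rewrite ln_gt0 // ltr1n.
set L := ln c / ln 2.
have beta_ge : L <= (beta eps)%:R.
  by apply: le_trans (ceil_ge L) _; rewrite natr_absz ler_int ler_norm.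
rewrite /bb natrX (_ : 2 = expR (ln 2)); last by rewrite lnK // posrE ltr0n.
rewrite -expRM_natl (_ : c = expR (L * ln 2)); last first.
  by rewrite /L divfK ?lnK ?posrE ?gt_eqF // (lt_le_trans ltr01).
by rewrite ler_expR ler_pM2r.
Qed.

Lemma beta_ge9 (R : realType) (eps : R) : 0 < eps < 1 -> (9 <= beta eps)%N.
Proof.
move=> eps01; have [e0 e1] := andP eps01.
rewrite -(@leq_exp2l 2) // -(ler_nat R) -/(bb eps).
apply: le_trans _ (bb_ge eps01); rewrite ler_pdivlMr ?exprn_gt0 //.
have eps2_le1 : eps ^+ 2 <= 1 by rewrite expr_le1 // ltW.
rewrite (le_trans (ler_piMr _ eps2_le1)) ?ler0n //.
by rewrite (_ : 9 * 2 ^+ 23 = (9 * 2 ^ 23)%N%:R) ?ler_nat // natrM natrX.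
Qed.

Lemma prob_fst (R : realType) (T U : finType) (E : pred T) : (0 < #|U|)%N ->
  prob R (fun x : T * U => E x.1) = prob R E.
Proof.
move=> U0; rewrite /prob (_ : [set x : T * U | E x.1] = setX [set t | E t] setT).
  by rewrite cardsX cardsT card_prod !natrM invfM mulrACA divff ?mulr1 // pnatr_eq0 -lt0n.
by apply/setP => -[t u]; rewrite !inE andbT.
Qed.

Lemma E1_notE2_level (R : realType) (eps : R) (n d : nat) (A : {set 'I_n})
    (f : 'I_n -> nat) :
  0 < eps -> (9 <= beta eps)%N -> (forall x, f x <= d)%N ->
  E1 eps A f -> ~~ E2 eps A f ->
  exists2 s : 'I_d.+1, (2 ^ s * bb eps <= 2 ^ 16 * #|A|)%N &
    eps / 3 * (2 ^- s * #|A|%:R)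
      < `|#|[set x in A | (s <= f x)%N]|%:R - 2 ^- s * #|A|%:R|.
Proof.
move=> e0 b9 f_le /andP[lowE1 _] notE2.
have [t_le0 | t_gt0] := lerP (tf eps A f) 0.
  have s0 : sf eps A f = 0 by rewrite /sf max_l.
  have RA : Rf eps A f = A by apply/setP => x; rewrite !inE s0 lez_nat leq0n andbT.
  case/negP: notE2; rewrite /E2 RA s0 expr0z mul1r subrr normr0.
  by rewrite mulr_ge0 ?divr_ge0 ?ler0n ?ltW.
set M := (\max_(a in A) f a)%N.
have tE : tf eps A f = (M + 9 - beta eps)%N%:Z by move: t_gt0; rewrite /tf -/M; lia.
set s := (M + 9 - beta eps)%N in tE.
have sd : (s < d.+1)%N.
  have : (M <= d)%N by apply/bigmax_leqP => x _.
  by rewrite /s; lia.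
have sE : sf eps A f = s%:Z by rewrite /sf tE max_r.
exists (Ordinal sd) => /=.
  have [u0 v0] : 0 < (2 : R) ^+ s /\ 0 < (2 : R) ^+ 16 by split; rewrite exprn_gt0.
  move: lowE1; rewrite tE -!exprnN ler_pdivrMl // mulrCA ler_pdivlMl //.
  by rewrite -(ler_nat R) natrM natrM (natrX _ 2 s) (natrX _ 2 16).
have -> : [set x in A | (s <= f x)%N] = Rf eps A f.
  by apply/setP => x; rewrite !inE sE lez_nat.
by rewrite ltNge exprnN -sE.
Qed.

Section FirstHash.
Variables (R : realType) (eps : R) (n d : nat) (p : {poly 'F_2}) (A : {set 'I_n}).
Hypotheses (eps01 : 0 < eps < 1) (n_le : (n <= 2 ^ d)%N) (size_p : size p = d.+1)
  (p_irr : irreducible_poly p) (A0 : A != set0).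

Local Notation Omega := {ffun 'I_2 -> 'I_(2 ^ d)}.

Definition deviates (s : nat) : {set Omega} :=
  [set a | eps / 3 * (2 ^- s * #|A|%:R)
           < `|#|[set x in A | (s <= Gfun p a x)%N]|%:R - 2 ^- s * #|A|%:R|].

Lemma card_deviates (s : nat) : (s <= d)%N ->
  #|deviates s|%:R <= 9 * #|Omega|%:R / (eps ^+ 2 * #|A|%:R) * (2 ^ s)%N%:R.
Proof.
move=> sd; have [e0 _] := andP eps01.
pose E (x : 'I_n) := [set a : Omega | (s <= Gfun p a x)%N].
have pow2_sub : (2 ^ (d - s))%N%:R = 2 ^- s * (2 ^ d)%N%:R :> R.
  by rewrite !natrX -[in RHS](subnKC sd) exprD mulKf // expf_neq0 // pnatr_eq0.
have card_E x : #|E x|%:R = 2 ^- s * #|Omega|%:R :> R.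
  by rewrite /E /Gfun card_tz_ge // natrM pow2_sub card_hash2 natrM mulrA.
have card_EI x y : x != y -> #|E x :&: E y|%:R = (2 ^- s) ^+ 2 * #|Omega|%:R :> R.
  move=> xy; have -> : E x :&: E y = [set a : Omega |
      (s <= tz d (gf_eval p a x))%N && (s <= tz d (gf_eval p a y))%N].
    by apply/setP => a; rewrite !inE.
  rewrite card_tz_ge2 ?(leq_trans (ltn_ord _) n_le) //.
  by rewrite natrM pow2_sub card_hash2 natrM mulrACA -expr2.
set c := eps / 3 * (2 ^- s * #|A|%:R).
have c_gt0 : 0 < c by rewrite !mulr_gt0 ?invr_gt0 ?exprn_gt0 ?ltr0n ?card_gt0.
have := @pairwise_indep_tail _ _ _ E A _ card_E card_EI c (ltW c_gt0).
have -> : [set t | c < `|hits E A t - 2 ^- s * #|A|%:R|] = deviates s.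
  apply/setP => a; rewrite /deviates /hits !inE -/c.
  by congr (_ < `|_%:R - _|); apply: eq_card => x; rewrite !inE.
move=> tail; rewrite -(ler_pM2r (exprn_gt0 2 c_gt0)); apply: le_trans tail _.
rewrite /c natrX; set u := (2 : R) ^+ s; set O := #|Omega|%:R.
rewrite [leRHS](_ : _ = u^-1 * #|A|%:R * O) //.
by field; rewrite /u !gt_eqF ?exprn_gt0 ?ltr0n ?card_gt0.
Qed.

Lemma prob_E1_notE2 :
  prob R (fun a : Omega => E1 eps A (Gfun p a (N := n)) && ~~ E2 eps A (Gfun p a (N := n)))
    <= 2 ^- 6.
Proof.
have [e0 _] := andP eps01; rewrite /prob.
pose level (s : 'I_d.+1) := (2 ^ s * bb eps <= 2 ^ 16 * #|A|)%N.
set bad := [set _ | _].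
have cover : bad \subset \bigcup_(s | level s) deviates s.
  apply/subsetP => a; rewrite inE => /andP[hE1 hE2].
  have [s ls dev] := E1_notE2_level e0 (beta_ge9 eps01) (fun x => tz_le _ _) hE1 hE2.
  by apply/bigcupP; exists s => //; rewrite inE.
set O := #|Omega|%:R : R; set a := #|A|%:R : R; set b := (bb eps)%:R : R.
have [O_gt0 a_gt0 b_gt0] : [/\ 0 < O, 0 < a & 0 < b].
  by rewrite !ltr0n card_hash2 muln_gt0 !expn_gt0 card_gt0.
have card_bad : #|bad|%:R <= 9 * O / (eps ^+ 2 * a) * \sum_(s | level s) (2 ^ s)%N%:R.
  rewrite mulr_sumr; apply: (@le_trans _ _ (\sum_(s | level s) #|deviates s|%:R)).
    by rewrite -natr_sum ler_nat (leq_trans (subset_leq_card cover)) ?card_bigcup_le.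
  by apply: ler_sum => s _; apply: card_deviates; rewrite // -ltnS.
have levels : \sum_(s | level s) (2 ^ s)%N%:R <= 2 ^+ 17 * a / b.
  rewrite ler_pdivlMr // mulr_suml; under eq_bigr do rewrite -natrM.
  rewrite -natr_sum exprS -mulrA -(natrX _ 2 16) -!natrM ler_nat.
  exact: sum_pow2_le.
have b_large : 9 * 2 ^+ 23 <= eps ^+ 2 * b.
  by rewrite -ler_pdivrMl ?exprn_gt0 // mulrC; apply: bb_ge.
rewrite ler_pdivrMr //; apply: le_trans card_bad _.
have k_ge0 : 0 <= 9 * O / (eps ^+ 2 * a) by rewrite divr_ge0 ?mulr_ge0 ?ltW ?exprn_gt0.
apply: le_trans (ler_wpM2l k_ge0 levels) _.
rewrite (_ : 9 * O / (eps ^+ 2 * a) * (2 ^+ 17 * a / b)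
    = 9 * 2 ^+ 17 * O / (eps ^+ 2 * b)); last by field; rewrite !gt_eqF.
rewrite ler_pdivrMr ?mulr_gt0 ?exprn_gt0 //.
rewrite (_ : 9 * 2 ^+ 17 * O = 2 ^- 6 * O * (9 * 2 ^+ 23)); last by field.
by rewrite ler_wpM2l // mulr_ge0 ?invr_ge0 ?exprn_ge0 ?ltW.
Qed.

End FirstHash.

Theorem lemma10 (R : realType) (n : nat) (eps : R)
  (d1 d2 d3 : nat) (p1 p2 p3 : {poly 'F_2}) :
  (1 <= n)%N -> 0 < eps < 1 ->
  (1 <= d1)%N -> (n <= 2 ^ d1)%N -> size p1 = d1.+1 -> irreducible_poly p1 ->
  (1 <= d2)%N -> (n <= 2 ^ d2)%N -> (5 + 2 * beta eps <= d2)%N ->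
  size p2 = d2.+1 -> irreducible_poly p2 ->
  (1 <= d3)%N -> (2 ^ 5 * bb eps ^ 2 <= 2 ^ d3)%N -> (beta eps <= d3)%N ->
  size p3 = d3.+1 -> irreducible_poly p3 ->
  forall A : {set 'I_n}, A != set0 ->
  prob R (T := ({ffun 'I_2 -> 'I_(2 ^ d1)} * {ffun 'I_2 -> 'I_(2 ^ d2)}
                 * {ffun 'I_(kk eps) -> 'I_(2 ^ d3)})%type)
    (fun psi =>
       let f := Gfun p1 psi.1.1 (N := n) in
       E1 eps A f && ~~ E2 eps A f)
  <= (2 : R) ^- 6.
Proof.
move=> _ eps01 _ n_le size_p1 p1_irr _ _ _ _ _ _ _ _ _ _ A A0.
have hash_nonempty k m : (0 < #|{ffun 'I_k -> 'I_(2 ^ m)}|)%N.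
  by rewrite card_ffun card_ord !expn_gt0.
pose bad (w : {ffun 'I_2 -> 'I_(2 ^ d1)}) :=
  E1 eps A (Gfun p1 w (N := n)) && ~~ E2 eps A (Gfun p1 w (N := n)).
rewrite (@prob_fst R _ _ (fun w => bad w.1)) // (@prob_fst R _ _ bad) //.
exact: prob_E1_notE2.
Qed.
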